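(* Let $\varphi$ be a morphism of class $P_{ret}$ defined on $\{0,1\}^*$. Then $\varphi$ is conjugate to a standard special $P$-morphism.
   Context: For a finite word $w$, $\overline w$ denotes its reversal; $w$ is a palindrome if $w=\overline w$. A morphism $\varphi:\mathcal B^*\to\mathcal A^*$ is of class $P_{ret}$ if there exists a palindrome $p\in\mathcal A^*$ such that: (a) $\varphi(b)p$ is a palindrome for every $b\in\mathcal B$; (b) for every $b\in\mathcal B$, $\varphi(b)p$ contains exactly two occurrences of $p$, one as a prefix and one as a suffix; (c) $\varphi(b)\ne\varphi(c)$ for distinct $b,c\in\mathcal B$. A morphism $\sigma$ is conjugate to $\varphi$ (same domain alphabet) if there is a word $w$ such that either for every letter $a$, $\varphi(a)$ has prefix $w$ and $\sigma(a)=w^{-1}\varphi(a)w$, or for every letter $a$, $\varphi(a)$ has suffix $w$ and $\sigma(a)=w\varphi(a)w^{-1}$. A morphism $\sigma$ is a standard $P$-morphism if there is a palindrome $r$ (possibly empty) such that for every letter $x$, $\sigma(x)=rq_x$ where each $q_x$ is a palindrome; if $r$ is non-empty, some $q_x$ may be empty or of the form $q_x=\pi_x^{-1}$ with $\pi_x$ a proper palindromic suffix of $r$ (meaning $\sigma(x)$ is $r$ with the suffix $\pi_x$ removed). It is special if (1) the words $\sigma(x)=rq_x$ end with pairwise different letters, and (2) whenever $\sigma(x)r=rq_xr$ (for a letter $x$) occurs in some $\sigma(y_1y_2\cdots y_n)r$, this occurrence is $\sigma(y_m)r$ for some $1\le m\le n$ (i.e., it starts at position $|\sigma(y_1\cdots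 y_{m-1})|$). *)

From mathcomp Require Import all_boot.
Set Implicit Arguments. Unset Strict Implicit. Unset Printing Implicit Defensive.

(* Words over an alphabet A are [seq A]; a morphism bool^* -> A^* is given by
   the images of the two letters, [phi : bool -> seq A]. *)
Section Words.
Variable A : eqType.

Definition palindrome (w : seq A) : bool := rev w == w.

Definition morph_word (phi : bool -> seq A) (ys : seq bool) : seq A :=
  flatten (map phi ys).

Definition occurs_at (p w : seq A) (i : nat) : bool :=
  (i + size p <= size w) && (take (size p) (drop i w) == p).

Definition num_occ (p w : seq A) : nat :=
  count (occurs_at p w) (iota 0 (size w).+1).

Definition P_ret (phi : bool -> seq A) : Prop :=
  exists p : seq A, palindrome p /\
    (forall b, palindrome (phi b ++ p)) /\
    (forall b, [/\ num_occ p (phi b ++ p) = 2,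
                   occurs_at p (phi b ++ p) 0 &
                   occurs_at p (phi b ++ p) (size (phi b))]) /\
    phi false <> phi true.

Definition conjugate (phi sigma : bool -> seq A) : Prop :=
  exists w : seq A,
    (forall a, prefix w (phi a) /\ sigma a = drop (size w) (phi a) ++ w) \/
    (forall a, suffix w (phi a) /\
               sigma a = w ++ take (size (phi a) - size w) (phi a)).

Definition standard_P_wrt (r : seq A) (sigma : bool -> seq A) : Prop :=
  palindrome r /\
  forall x,
    (exists q, palindrome q /\ sigma x = r ++ q) \/
    (r != [::] /\ exists pi, [/\ palindrome pi, suffix pi r, size pi < size r &
                                 sigma x = take (size r - size pi) r]).

Definition special_wrt (r : seq A) (sigma : bool -> seq A) : Prop :=
  (forall x, sigma x != [::]) /\
  (forall x y, x != y -> forall d : A, last d (sigma x) != last d (sigma y)) /\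
  (forall (x : bool) (ys : seq bool) (i : nat),
     occurs_at (sigma x ++ r) (morph_word sigma ys ++ r) i ->
     exists2 m, m < size ys &
       i = size (morph_word sigma (take m ys)) /\
       sigma x = sigma (nth false ys m)).

Definition standard_special_P (sigma : bool -> seq A) : Prop :=
  exists r : seq A, standard_P_wrt r sigma /\ special_wrt r sigma.

End Words.

From mathcomp Require Import all_boot.
From mathcomp Require Import zify.
Set Implicit Arguments. Unset Strict Implicit. Unset Printing Implicit Defensive.

(* Write phi(b) = u_b s with s the longest common suffix of the two images;
   since p returns only at the ends of each phi(b) p and phi(0) <> phi(1),
   both u_b are non-empty and end with different letters.  Rotating by s gives
   sigma(b) = s u_b, and with r = s p (rev s) every sigma(b) r = s (phi(b) p) (rev s)
   is a palindrome, which makes sigma a standard P-morphism.  An occurrence of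
   sigma(x) r in sigma(y_1 .. y_n) r strips to an occurrence of phi(x) p in
   phi(y_1 .. y_n) p, and these are synchronised because the first p of
   phi(x) p can only sit at a return of p. *)

Lemma catsI (T : Type) (u : seq T) : injective (cat u).
Proof. by elim: u => //= x u IH a b [] /IH. Qed.

Lemma catIs (T : Type) (u : seq T) : injective (cat^~ u).
Proof.
move=> a b /= e; have sab : size a = size b.
  by move: (congr1 size e); rewrite !size_cat; lia.
by move: (congr1 (take (size a)) e); rewrite take_size_cat // take_size_cat.
Qed.

Lemma take_drop_take (T : Type) (l : seq T) n j m : j + m <= n ->
  take m (drop j (take n l)) = take m (drop j l).
Proof. by move=> h; rewrite !take_drop take_takel //; lia. Qed.

Section Occurrences.
Variable A : eqType.
Implicit Types p q w u v : seq A.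

Lemma occurs_at_inv q w i :
  occurs_at q w i -> take (size q) (drop i w) = q /\ i + size q <= size w.
Proof. by case/andP=> h /eqP. Qed.

Lemma occurs_at_trans q q' w i j :
  occurs_at q w i -> occurs_at q' q j -> occurs_at q' w (i + j).
Proof.
move=> /occurs_at_inv [h1 h2] /occurs_at_inv [h3 h4].
apply/andP; split; first lia.
apply/eqP; rewrite -[in RHS]h3 -[in RHS]h1 take_drop_take // drop_drop.
by congr (take _ (drop _ _)); lia.
Qed.

Lemma occurs_at_within q q' w i k :
  occurs_at q w i -> occurs_at q' w k -> i <= k -> k + size q' <= i + size q ->
  occurs_at q' q (k - i).
Proof.
move=> /occurs_at_inv [h1 h2] /occurs_at_inv [h3 h4] hik hk.
apply/andP; split; first lia.
apply/eqP; rewrite -h1 take_drop_take; last by rewrite -(leq_add2l i) addnA subnKC.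
by rewrite drop_drop -[RHS]h3; congr (take _ (drop _ _)); lia.
Qed.

Lemma occurs_at_prefix u v : occurs_at u (u ++ v) 0.
Proof. by apply/andP; rewrite drop0 take_size_cat // size_cat; split; [lia|]. Qed.

Lemma occurs_at_suffix u v : occurs_at v (u ++ v) (size u).
Proof. by apply/andP; rewrite drop_size_cat // take_size size_cat; split; [lia|]. Qed.

Lemma occurs_at_catr p u v j :
  occurs_at p (u ++ v) (size u + j) = occurs_at p v j.
Proof.
rewrite /occurs_at size_cat (addnC (size u) j) -drop_drop drop_size_cat //.
by congr andb; apply/idP/idP; lia.
Qed.

Lemma occurs_at_frame q w s t i :
  occurs_at (s ++ q ++ t) (s ++ w ++ t) i -> occurs_at q w i.
Proof.
move=> hoc; have [_] := occurs_at_inv hoc; rewrite !size_cat => hle.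
have := occurs_at_trans hoc (occurs_at_suffix s (q ++ t)).
rewrite addnC occurs_at_catr => /occurs_at_trans /(_ (occurs_at_prefix q t)).
rewrite addn0 => /(occurs_at_within (occurs_at_prefix w t)).
by rewrite subn0; apply; lia.
Qed.

Lemma occurs_at_mem_iota p w k :
  occurs_at p w k -> k \in iota 0 (size w).+1.
Proof. by case/occurs_at_inv=> _ h; rewrite mem_iota; lia. Qed.

Lemma num_occ_self p : num_occ p p <= 1.
Proof.
rewrite /num_occ -size_filter -[1]/(size [:: 0]).
apply: uniq_leq_size; first exact/filter_uniq/iota_uniq.
by move=> k; rewrite mem_filter mem_seq1 => /andP [/occurs_at_inv [_ hk] _]; apply/eqP; lia.
Qed.

Lemma num_occ_ge3 p w i j k :
  uniq [:: i; j; k] -> occurs_at p w i -> occurs_at p w j -> occurs_at p w k ->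
  3 <= num_occ p w.
Proof.
move=> huniq hi hj hk; rewrite /num_occ -size_filter -[3]/(size [:: i; j; k]).
apply: uniq_leq_size => // l; rewrite !inE => /or3P [] /eqP ->; rewrite mem_filter.
- by rewrite hi (occurs_at_mem_iota hi).
- by rewrite hj (occurs_at_mem_iota hj).
- by rewrite hk (occurs_at_mem_iota hk).
Qed.

Lemma num_occ2_nonempty p x : num_occ p (x ++ p) = 2 -> x != [::].
Proof. by apply: contra_eqN => /eqP ->; rewrite cat0s; have := num_occ_self p; lia. Qed.

Lemma num_occ2_positions p x j :
  num_occ p (x ++ p) = 2 -> occurs_at p (x ++ p) 0 ->
  occurs_at p (x ++ p) (size x) -> occurs_at p (x ++ p) j ->
  j = 0 \/ j = size x.
Proof.
move=> h2 h0 hx hj; case: (eqVneq j 0) => [|j0]; first by left.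
case: (eqVneq j (size x)) => [|jx]; first by right.
have sx : size x != 0 by rewrite size_eq0 (num_occ2_nonempty h2).
have := @num_occ_ge3 p (x ++ p) 0 (size x) j; rewrite h2.
by rewrite /= !inE negb_or eq_sym sx eq_sym j0 eq_sym jx; move/(_ isT h0 hx hj).
Qed.

Lemma palindrome_cat_standard r X :
  palindrome r -> palindrome (X ++ r) -> X != [::] ->
  (exists q, palindrome q /\ X = r ++ q) \/
  (r != [::] /\ exists pi, [/\ palindrome pi, suffix pi r, size pi < size r &
                               X = take (size r - size pi) r]).
Proof.
rewrite /palindrome => /eqP hr /eqP hXr hX.
have e : X ++ r = r ++ rev X by rewrite -{1}hXr rev_cat hr.
have sX : 0 < size X by rewrite lt0n size_eq0.
case: (leqP (size r) (size X)) => hs.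
  left; exists (drop (size r) X).
  have ht : take (size r) X = r.
    by move: (congr1 (take (size r)) e); rewrite takel_cat // take_size_cat.
  have eX : X = r ++ drop (size r) X by rewrite -{1}(cat_take_drop (size r) X) ht.
  split => //; apply/eqP; move: e; set q := drop (size r) X => e.
  have : r ++ (q ++ r) = r ++ (rev q ++ r) by rewrite catA -eX e {1}eX rev_cat hr.
  by move/catsI/catIs => <-.
right; split; first by rewrite -size_eq0; apply/eqP; lia.
have ht : take (size X) r = X.
  by move: (congr1 (take (size X)) e); rewrite take_size_cat // takel_cat //; lia.
set pi := drop (size X) r.
have er : r = X ++ pi by rewrite -{1}(cat_take_drop (size X) r) ht.
exists pi; split.
- by move: e hr; rewrite er rev_cat -catA => /catsI -> /catIs ->.
- by rewrite er suffix_suffix.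
- by rewrite er size_cat; lia.
- by rewrite er size_cat addnK take_size_cat.
Qed.

Lemma split_common_prefix w1 w2 :
  exists c t1 t2, [/\ w1 = c ++ t1, w2 = c ++ t2 &
    t1 = [::] \/ t2 = [::] \/
    exists x1 v1 x2 v2, [/\ t1 = x1 :: v1, t2 = x2 :: v2 & x1 != x2]].
Proof.
elim: w1 w2 => [|a w1 IH] w2; first by exists [::], [::], w2; split => //; left.
case: w2 => [|b w2]; first by exists [::], (a :: w1), [::]; split => //; right; left.
case: (eqVneq a b) => [<-|ab].
  have [c [t1 [t2 [e1 e2 h]]]] := IH w2.
  by exists (a :: c), t1, t2; rewrite e1 e2.
by exists [::], (a :: w1), (b :: w2); split => //; right; right; exists a, w1, b, w2.
Qed.

Lemma split_common_suffix w1 w2 :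
  exists s u1 u2, [/\ w1 = u1 ++ s, w2 = u2 ++ s &
    u1 = [::] \/ u2 = [::] \/ forall d, last d u1 != last d u2].
Proof.
have [c [t1 [t2 [e1 e2 h]]]] := split_common_prefix (rev w1) (rev w2).
exists (rev c), (rev t1), (rev t2); split; try by rewrite -rev_cat -?e1 -?e2 revK.
case: h => [->|[->|[x1 [v1 [x2 [v2 [-> -> x12]]]]]]]; [by left|by right; left|].
by right; right => d; rewrite !rev_cons !last_rcons.
Qed.

End Occurrences.

Section ReturnWords.
Variables (A : eqType) (phi : bool -> seq A) (p : seq A).
Hypothesis phi_neq0 : forall b, phi b != [::].
Hypothesis p_prefix : forall b, occurs_at p (phi b ++ p) 0.
Hypothesis p_returns :
  forall b j, occurs_at p (phi b ++ p) j -> j = 0 \/ j = size (phi b).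

Lemma morph_word_p_prefix ys : exists X, morph_word phi ys ++ p = p ++ X.
Proof.
elim: ys => [|y ys [X hX]]; first by exists [::]; rewrite cats0.
have /occurs_at_inv [hp _] := p_prefix y; rewrite drop0 in hp.
exists (drop (size p) (phi y ++ p) ++ X).
by rewrite /morph_word /= -catA hX catA -{1}(cat_take_drop (size p) (phi y ++ p)) hp catA.
Qed.

Lemma return_word_suffix_eq b c v : phi c = v ++ phi b -> v = [::].
Proof.
move=> ec; have := p_prefix b.
rewrite -(occurs_at_catr _ v) catA -ec addn0 => /p_returns.
rewrite ec size_cat; have := phi_neq0 b; rewrite -size_eq0 => nb [v0|]; last lia.
by apply/eqP; rewrite -size_eq0 v0.
Qed.

(* If the first letters of phi(x) p and phi(y) p are aligned, the shorter of
   the two images would put the return p strictly inside the longer one. *)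
Lemma return_words_aligned x y X :
  occurs_at (phi x ++ p) ((phi y ++ p) ++ X) 0 -> phi x = phi y.
Proof.
move=> hoc; have := phi_neq0 x; have := phi_neq0 y; rewrite -!size_eq0 => ny nx.
have hpx : occurs_at p ((phi y ++ p) ++ X) (size (phi x)).
  by have := occurs_at_trans hoc (occurs_at_suffix (phi x) p).
have hpy : occurs_at p ((phi y ++ p) ++ X) (size (phi y)).
  by rewrite -catA -[size (phi y)]addn0 occurs_at_catr occurs_at_prefix.
case: (ltngtP (size (phi x)) (size (phi y))) => hxy.
- have := occurs_at_within (occurs_at_prefix (phi y ++ p) X) hpx (leq0n _).
  by rewrite subn0 size_cat => /(_ ltac:(lia)) /p_returns; lia.
- have := occurs_at_within hoc hpy (leq0n _).
  by rewrite subn0 size_cat => /(_ ltac:(lia)) /p_returns; lia.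
- have /occurs_at_inv [ex _] := occurs_at_trans hoc (occurs_at_prefix (phi x) p).
  have /occurs_at_inv [ey _] := occurs_at_prefix (phi y) (p ++ X).
  by rewrite -[LHS]ex -[RHS]ey -catA hxy.
Qed.

Lemma morph_word_sync x ys i :
  occurs_at (phi x ++ p) (morph_word phi ys ++ p) i ->
  exists2 m, m < size ys &
    i = size (morph_word phi (take m ys)) /\ phi x = phi (nth false ys m).
Proof.
elim: ys i => [|y ys IH] i.
  case/occurs_at_inv=> _; rewrite /= size_cat; have := phi_neq0 x.
  by rewrite -size_eq0; lia.
rewrite /morph_word /= -catA; case: (leqP (size (phi y)) i) => hi.
  rewrite -(subnKC hi) occurs_at_catr => /IH [m hm [e1 e2]].
  by exists m.+1 => //; split => //; rewrite /morph_word /= size_cat -e1.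
have [X ->] := morph_word_p_prefix ys; rewrite catA => hoc.
have := occurs_at_within (occurs_at_prefix (phi y ++ p) X)
                         (occurs_at_trans hoc (p_prefix x)) (leq0n _).
rewrite addn0 subn0 size_cat => /(_ ltac:(lia)) /p_returns [i0|]; last lia.
by move: hoc; rewrite i0 => /return_words_aligned ex; exists 0.
Qed.

Lemma return_words_common_suffix : phi false <> phi true ->
  exists s (u : bool -> seq A), [/\ forall b, phi b = u b ++ s,
    forall b, u b != [::] & forall d, last d (u false) != last d (u true)].
Proof.
move=> neq; have [s [u1 [u2 [e1 e2 h]]]] := split_common_suffix (phi false) (phi true).
pose u b := if b then u2 else u1.
have ephi b : phi b = u b ++ s by case: b.
have hu b : u b != [::].
  apply/eqP => ub; have un : u (~~ b) = [::].
    by apply: (@return_word_suffix_eq b (~~ b)); rewrite !ephi ub.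
  have e : phi b = phi (~~ b) by rewrite !ephi ub un.
  by apply: neq; case: b {ub un} e => [/esym|].
exists s, u; split => //.
by case: h => [u10|[u20|//]]; [have := hu false | have := hu true]; rewrite /u ?u10 ?u20.
Qed.

End ReturnWords.

Section Rotation.
Variables (A : eqType) (phi u : bool -> seq A) (s : seq A).
Hypothesis phi_split : forall b, phi b = u b ++ s.
Hypothesis u_neq0 : forall b, u b != [::].

Let sigma b := s ++ u b.

Lemma rotation_neq0 b : sigma b != [::].
Proof. by rewrite /sigma -size_eq0 size_cat; have := u_neq0 b; rewrite -size_eq0; lia. Qed.

Lemma conjugate_rotation : conjugate phi sigma.
Proof.
exists s; right => b; rewrite phi_split suffix_suffix; split => //.
by rewrite /sigma size_cat addnK take_size_cat.
Qed.

Lemma morph_word_rotation ys : morph_word sigma ys ++ s = s ++ morph_word phi ys.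
Proof.
elim: ys => [|y ys IH]; first by rewrite cats0.
by rewrite /morph_word /= -catA IH phi_split -!catA.
Qed.

Lemma size_morph_word_rotation ys :
  size (morph_word sigma ys) = size (morph_word phi ys).
Proof. by have := congr1 size (morph_word_rotation ys); rewrite !size_cat; lia. Qed.

Lemma rotation_standard_P p :
  palindrome p -> (forall b, palindrome (phi b ++ p)) ->
  standard_P_wrt (s ++ p ++ rev s) sigma.
Proof.
move=> /eqP p_pal phip_pal.
have r_pal : palindrome (s ++ p ++ rev s) by rewrite /palindrome !rev_cat revK p_pal catA.
split => // b; apply: palindrome_cat_standard (rotation_neq0 b) => //.
have /eqP phib_pal := phip_pal b.
have -> : sigma b ++ s ++ p ++ rev s = s ++ (phi b ++ p) ++ rev s.
  by rewrite /sigma phi_split -!catA.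
by rewrite /palindrome rev_cat rev_cat revK phib_pal -!catA.
Qed.

Lemma rotation_special p :
  (forall d, last d (u false) != last d (u true)) ->
  (forall b, occurs_at p (phi b ++ p) 0) ->
  (forall b j, occurs_at p (phi b ++ p) j -> j = 0 \/ j = size (phi b)) ->
  special_wrt (s ++ p ++ rev s) sigma.
Proof.
move=> u_last p_prefix p_returns.
have phi_neq0 b : phi b != [::].
  by rewrite phi_split -size_eq0 size_cat; have := u_neq0 b; rewrite -size_eq0; lia.
split; first exact: rotation_neq0.
split.
  by move=> [] [] // _ d; rewrite /sigma !last_cat // eq_sym.
move=> x ys i.
have -> : sigma x ++ s ++ p ++ rev s = s ++ (phi x ++ p) ++ rev s.
  by rewrite /sigma phi_split -!catA.
have -> : morph_word sigma ys ++ s ++ p ++ rev s =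
          s ++ (morph_word phi ys ++ p) ++ rev s.
  by rewrite catA morph_word_rotation -!catA.
move=> /occurs_at_frame /(morph_word_sync phi_neq0 p_prefix p_returns) [m hm [ei ex]].
exists m => //; split; first by rewrite size_morph_word_rotation.
by move: ex; rewrite /sigma !phi_split => /catIs ->.
Qed.

End Rotation.

Theorem lemma6p4 (A : eqType) (phi : bool -> seq A) :
  P_ret phi ->
  exists sigma : bool -> seq A, conjugate phi sigma /\ standard_special_P sigma.
Proof.
move=> [p [p_pal [phip_pal [p_occ phi_neq]]]].
have phi_neq0 b : phi b != [::] by case: (p_occ b) => /num_occ2_nonempty.
have p_prefix b : occurs_at p (phi b ++ p) 0 by case: (p_occ b).
have p_returns b j : occurs_at p (phi b ++ p) j -> j = 0 \/ j = size (phi b).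
  by case: (p_occ b) => h2 h0 hb; apply: num_occ2_positions.
have [s [u [phi_split u_neq0 u_last]]] :=
  return_words_common_suffix phi_neq0 p_prefix p_returns phi_neq.
exists (fun b => s ++ u b); split; first exact: conjugate_rotation.
exists (s ++ p ++ rev s); split; first exact: rotation_standard_P.
exact: rotation_special.
Qed.
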